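(* Let $n \geq 2$ and $d$ be integers with $0 < d < n$, and write $n = n^1 \cdot d + n^0$ with $n^1, n^0 \in \mathbb{Z}$ and $0 \leq n^0 < d$. Let $a \in \mathbb{Z}_n$ and let $\langle a\rangle_0, \langle a\rangle_1 \in \mathbb{Z}_n$ satisfy $\langle a\rangle_0 + \langle a\rangle_1 = a$ in $\mathbb{Z}_n$. Let $a_u, a_0, a_1 \in \{0,1,\ldots,n-1\}$ be the unsigned representatives of $a, \langle a\rangle_0, \langle a\rangle_1$ respectively, and write $a_0 = a_0^1 \cdot d + a_0^0$ and $a_1 = a_1^1 \cdot d + a_1^0$ with $a_0^1,a_0^0,a_1^1,a_1^0 \in \mathbb{Z}$ and $0 \le a_0^0, a_1^0 < d$. Let $n' = \lceil n/2 \rceil$. Define integers $$\mathsf{corr} = \begin{cases} -1 & \text{if } (a_u \ge n') \wedge (a_0 < n') \wedge (a_1 < n'),\\ 1 & \text{if } (a_u < n') \wedge (a_0 \ge n') \wedge (a_1 \ge n'),\\ 0 & \text{otherwise,}\end{cases}$$ $$A = a_0^0 + a_1^0 - \big(\mathbf{1}\{a_0 \ge n'\} + \mathbf{1}\{a_1 \ge n'\} - \mathsf{corr}\big)\cdot n^0,$$ $$B = \mathsf{idiv}\big(a_0^0 - \mathbf{1}\{a_0 \ge n'\}\cdot n^0,\ d\big) + \mathsf{idiv}\big(a_1^0 - \mathbf{1}\{a_1 \ge n'\}\cdot n^0,\ d\big),$$ $$C = \mathbf{1}\{A < d\} + \mathbf{1}\{A < 0\} + \mathbf{1}\{A < -d\}.$$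 Then $$\mathsf{rdiv}(\langle a\rangle_0, d) + \mathsf{rdiv}(\langle a\rangle_1, d) + \big(\mathsf{corr}\cdot n^1 + 1 - C - B\big) \equiv \mathsf{rdiv}(a, d) \pmod n.$$
   Context: $\mathbf{1}\{P\}$ denotes the indicator that is $1$ if $P$ is true and $0$ otherwise. $\mathsf{idiv}:\mathbb{Z}\times\mathbb{Z}\to\mathbb{Z}$ is signed integer division in which the quotient is rounded towards $-\infty$ (so for $d>0$, $\mathsf{idiv}(x,d) = \lfloor x/d \rfloor$). For $x \in \mathbb{Z}_n$ with unsigned representative $x_u \in \{0,\ldots,n-1\}$ and an integer $0<d<n$, $\mathsf{rdiv}(x,d) \in \mathbb{Z}_n$ is defined as $\mathsf{idiv}\big(x_u - \mathbf{1}\{x_u \ge \lceil n/2\rceil\}\cdot n,\ d\big) \bmod n$, i.e. division of the signed value of $x$ by $d$, reduced mod $n$. The sum in the conclusion is taken in $\mathbb{Z}_n$ (integers reduced modulo $n$). *)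

From mathcomp Require Import all_boot all_order all_algebra.
Set Implicit Arguments. Unset Strict Implicit. Unset Printing Implicit Defensive.
Import Order.TTheory GRing.Theory Num.Theory.
Local Open Scope ring_scope.

Definition ind (b : bool) : int := (b : nat)%:Z.

(* signed integer division rounding towards -oo (floor division).
   For d > 0 this is mathcomp's Euclidean quotient (x %/ d)%Z. *)
Definition idiv (x d : int) : int :=
  if (0 < d) then (x %/ d)%Z
  else if (d < 0) then ((- x) %/ (- d))%Z
  else 0.

Definition halfup (n : nat) : nat := n.+1./2.

(* rdiv x d in Z_n : divide the signed value of x by d, reduce mod n.
   The unsigned representative of x : 'Z_n is its value (valid when 1 < n). *)
Definition rdiv (n : nat) (x : 'Z_n) (d : nat) : 'Z_n :=
  (idiv ((x : nat)%:Z - ind (halfup n <= x)%N * n%:Z) d%:Z)%:~R.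

From mathcomp Require Import all_boot all_order all_algebra zify ring.
Import Order.TTheory GRing.Theory Num.Theory.
Local Open Scope ring_scope.

(* The signed value of a sum in Z_n is the sum of the signed values of the
   summands, up to a multiple [corr * n] that corrects for a wrap-around of
   the signed range.  Writing n = n^1 d + n^0 and each summand's signed value
   as (quotient) d + (remainder), the remainders add up to A, so the floor of
   the total by d is the sum of the quotients, plus [corr * n^1], plus
   floor(A / d).  Since A = a_0^0 + a_1^0 - k n^0 with 0 <= k <= 2, we have
   |A| < 2d, and floor(A / d) is read off from the thresholds d, 0, -d
   as 1 - C. *)

Definition signed_rep (N x : nat) : int := x%:Z - ind (halfup N <= x)%N * N%:Z.

Definition wrap_corr (np xa x0 x1 : nat) : int :=
  if [&& (np <= xa)%N, (x0 < np)%N & (x1 < np)%N] then -1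
  else if [&& (xa < np)%N, (np <= x0)%N & (np <= x1)%N] then 1
  else 0.

Lemma idiv_pos (x d : int) : 0 < d -> idiv x d = (x %/ d)%Z.
Proof. by rewrite /idiv => ->. Qed.

Lemma rdiv_signed (n : nat) (x : 'Z_n) (d : nat) :
  rdiv x d = (idiv (signed_rep n x) d%:Z)%:~R.
Proof. by []. Qed.

(* Both directions of [N <= 2 * halfup N <= N + 1] are needed: the lower bound
   rules out a wrap when no carry occurs, the upper one when it does. *)
Lemma signed_rep_addn (N x0 x1 : nat) : (x0 < N)%N -> (x1 < N)%N ->
  let xa := ((x0 + x1) %% N)%N in
  signed_rep N xa =
    signed_rep N x0 + signed_rep N x1 + wrap_corr (halfup N) xa x0 x1 * N%:Z.
Proof.
move=> lt_x0 lt_x1 xa; rewrite /xa /signed_rep /wrap_corr /ind.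
have : (N <= halfup N * 2 <= N + 1)%N by rewrite /halfup; lia.
move: (halfup N) => np bounds_np.
have [lt_s|ge_s] := ltnP (x0 + x1) N.
  rewrite modn_small //.
  by case: (leqP np (x0 + x1)); case: (leqP np x0); case: (leqP np x1) => /= *; lia.
have -> : ((x0 + x1) %% N = x0 + x1 - N)%N.
  by rewrite -{1}(subnK ge_s) modnDr modn_small //; lia.
by case: (leqP np (x0 + x1 - N)); case: (leqP np x0); case: (leqP np x1) => /= *; lia.
Qed.

Lemma wrap_corr_count (np xa x0 x1 : nat) :
  0 <= ind (np <= x0)%N + ind (np <= x1)%N - wrap_corr np xa x0 x1 <= 2.
Proof.
rewrite /wrap_corr /ind.
by case: (leqP np xa); case: (leqP np x0); case: (leqP np x1) => /= *; lia.
Qed.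

Lemma divz_eq_bounds (x d k : int) : 0 <= x - k * d < d -> (x %/ d)%Z = k.
Proof.
move=> bounds; have d_gt0 : 0 < d by lia.
rewrite -(subrK (k * d) x) addrC divzMDl ?gt_eqF // divz_small ?addr0 //.
by rewrite abszE gtr0_norm.
Qed.

Lemma divz_thresholds (x d : int) : 0 < d -> - (2 * d) <= x < 2 * d ->
  (x %/ d)%Z = 1 - (ind (x < d) + ind (x < 0) + ind (x < - d)).
Proof.
move=> d_gt0 bounds; rewrite /ind.
by case: (ltrP x d); case: (ltrP x 0); case: (ltrP x (- d)) => /= *;
  apply: divz_eq_bounds; lia.
Qed.

Theorem theorem4p1 (n d : nat) (hn : (2 <= n)%N) (hd0 : (0 < d)%N) (hdn : (d < n)%N)
  (n1 n0 : int) (hnd : n%:Z = n1 * d%:Z + n0) (hn0 : 0 <= n0) (hn0d : n0 < d%:Z)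
  (a a0 a1 : 'Z_n) (hsum : a0 + a1 = a)
  (a01 a00 a11 a10 : int)
  (ha0 : (a0 : nat)%:Z = a01 * d%:Z + a00) (ha00 : 0 <= a00) (ha00d : a00 < d%:Z)
  (ha1 : (a1 : nat)%:Z = a11 * d%:Z + a10) (ha10 : 0 <= a10) (ha10d : a10 < d%:Z) :
  let n' := halfup n in
  let corr : int :=
    if [&& (n' <= a)%N, (a0 < n')%N & (a1 < n')%N] then -1
    else if [&& (a < n')%N, (n' <= a0)%N & (n' <= a1)%N] then 1
    else 0 in
  let A : int := a00 + a10 - (ind (n' <= a0)%N + ind (n' <= a1)%N - corr) * n0 in
  let B : int := idiv (a00 - ind (n' <= a0)%N * n0) d%:Z
               + idiv (a10 - ind (n' <= a1)%N * n0) d%:Z in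
  let C : int := ind (A < d%:Z) + ind (A < 0) + ind (A < - d%:Z) in
  rdiv a0 d + rdiv a1 d + (corr * n1 + 1 - C - B)%:~R = rdiv a d.
Proof.
move=> n' corr A B C.
have d_gt0 : 0 < d%:Z by rewrite ltz_nat.
have [m def_n] : exists m, n = m.+2 by exists n.-2; lia.
subst n; rewrite !rdiv_signed /B /C !idiv_pos // -!intrD; congr _%:~R.
have val_a : a = ((a0 + a1) %% m.+2)%N :> nat by rewrite -hsum.
rewrite val_a signed_rep_addn // -val_a -[wrap_corr _ _ _ _]/corr.
set i0 := ind (n' <= a0)%N; set i1 := ind (n' <= a1)%N.
have split0 : signed_rep m.+2 a0 = (a01 - i0 * n1) * d%:Z + (a00 - i0 * n0).
  by rewrite /signed_rep ha0 hnd; ring.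
have split1 : signed_rep m.+2 a1 = (a11 - i1 * n1) * d%:Z + (a10 - i1 * n0).
  by rewrite /signed_rep ha1 hnd; ring.
have splitA : signed_rep m.+2 a0 + signed_rep m.+2 a1 + corr * m.+2%:Z
    = (a01 - i0 * n1 + (a11 - i1 * n1) + corr * n1) * d%:Z + A.
  by rewrite split0 split1 /A -/i0 -/i1 hnd; ring.
have A_bounds : - (2 * d%:Z) <= A < 2 * d%:Z.
  have : 0 <= i0 + i1 - corr <= 2 by exact: wrap_corr_count.
  by rewrite /A -/i0 -/i1; move: (i0 + i1 - corr) => k k_bounds; nia.
rewrite splitA split0 split1 !divzMDl ?gt_eqF //.
by rewrite (divz_thresholds _ _ d_gt0 A_bounds); ring.
Qed.
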